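(* Let $\lambda_1=\lambda_2>\lambda_3>0$ and $D=\mathrm{diag}(\lambda_1,\lambda_1,\lambda_3)$. Then: (i) $\mathrm{diag}(-1,-1,1)$ is the unique global maximum of $\widetilde W_{1,0}(\cdot;D)$ on $SO(3)$. (ii) If $\lambda_1>1$, the global minima of $\widetilde W_{1,0}(\cdot;D)$ on $SO(3)$ are exactly the two rotations $$\begin{pmatrix}\frac1{\lambda_1} & \mp\sqrt{1-\frac1{\lambda_1^2}} & 0\\ \pm\sqrt{1-\frac1{\lambda_1^2}} & \frac1{\lambda_1} & 0\\ 0&0&1\end{pmatrix}.$$ (iii) If $\lambda_1\le1$, then $\mathbb I_3$ is the unique global minimum of $\widetilde W_{1,0}(\cdot;D)$ on $SO(3)$.
   Context: $\mathrm{sym}(Y)=\tfrac12(Y+Y^T)$, $\|Y\|^2=\mathrm{tr}(Y^TY)$. $\widetilde W_{1,0}(R;D)=\|\mathrm{sym}(R^TD-\mathbb I_3)\|^2$ for $R\in SO(3)$. *)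

(* the statement is purely algebraic (matrices over a real
   closed field), stated for an arbitrary R : rcfType (which includes the
   real numbers); Num.sqrt provides the square root. *)
From HB Require Import structures.
From mathcomp Require Import all_boot all_order all_algebra.
Set Implicit Arguments. Unset Strict Implicit. Unset Printing Implicit Defensive.
Import Order.TTheory GRing.Theory Num.Theory.
Local Open Scope ring_scope.

Definition symm (R : rcfType) (Y : 'M[R]_3) : 'M[R]_3 := 2^-1 *: (Y + Y^T).

Definition sqnorm (R : rcfType) (Y : 'M[R]_3) : R := \tr (Y^T *m Y).

Definition SO3 (R : rcfType) (Q : 'M[R]_3) : Prop :=
  Q^T *m Q = 1%:M /\ \det Q = 1.

Definition W10 (R : rcfType) (D Q : 'M[R]_3) : R :=
  sqnorm (symm (Q^T *m D - 1%:M)).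

Definition mx3 (R : rcfType) (a b c d e f g h k : R) : 'M[R]_3 :=
  \matrix_(i < 3, j < 3)
    nth 0 (nth [::] [:: [:: a; b; c]; [:: d; e; f]; [:: g; h; k]] i) j.

Definition diag3 (R : rcfType) (a b c : R) : 'M[R]_3 := mx3 a 0 0 0 b 0 0 0 c.

Definition is_global_min_SO3 (R : rcfType) (f : 'M[R]_3 -> R) (Q : 'M[R]_3) :=
  SO3 Q /\ forall P, SO3 P -> f Q <= f P.
Definition is_global_max_SO3 (R : rcfType) (f : 'M[R]_3 -> R) (Q : 'M[R]_3) :=
  SO3 Q /\ forall P, SO3 P -> f P <= f Q.

From HB Require Import structures.
From mathcomp Require Import all_boot all_order all_algebra.
From mathcomp Require Import ring lra.
Set Implicit Arguments. Unset Strict Implicit.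
Import Order.TTheory GRing.Theory Num.Theory.
Local Open Scope ring_scope.

(* Using that the
   rows and columns of a rotation are orthonormal and that every diagonal
   entry of a rotation equals its own cofactor (Q = cof Q when Q^T Q = 1 and
   det Q = 1), W collapses to a function of the two numbers t = Q11 + Q22 and
   k = Q33 only:
       W = (l1 t - 2 - (1 - k) l3)^2 / 2 + (1 - k)(l1^2 - l3^2) + (l3 - 1)^2.
   The quaternion identities (1 + tr Q)(1 + 2 Q_ii - tr Q) = (square) confine
   (t, k) to the triangle -(1 + k) <= t <= 1 + k, -1 <= k <= 1, on which
   elementary inequalities locate the extrema: the maximum is attained only at
   (t, k) = (-2, 1); the minimum only at k = 1 with l1 t = 2 when l1 > 1, and
   only at (t, k) = (2, 1) when l1 <= 1.  Finally k = Q33 = 1 forces Q to be a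
   rotation about the third axis, with cosine c = t / 2 and sine determined up
   to sign by c^2 + s^2 = 1. *)

Definition i0 : 'I_3 := @Ordinal 3 0 isT.
Definition i1 : 'I_3 := @Ordinal 3 1 isT.
Definition i2 : 'I_3 := @Ordinal 3 2 isT.

Lemma ord3_ind (P : 'I_3 -> Prop) : P i0 -> P i1 -> P i2 -> forall i, P i.
Proof.
move=> P0 P1 P2 [[|[|[|m]]] lt_m3] //.
- by rewrite (_ : Ordinal _ = i0) //; apply: val_inj.
- by rewrite (_ : Ordinal _ = i1) //; apply: val_inj.
- by rewrite (_ : Ordinal _ = i2) //; apply: val_inj.
Qed.

Section Coordinates.
Variable R : rcfType.

Lemma sum_ord3 (F : 'I_3 -> R) : \sum_(i < 3) F i = F i0 + F i1 + F i2.
Proof.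
rewrite !big_ord_recl big_ord0 addr0 addrA.
by congr (F _ + F _ + F _); apply: val_inj.
Qed.

Lemma mulmx3E (A B : 'M[R]_3) i j :
  (A *m B) i j = A i i0 * B i0 j + A i i1 * B i1 j + A i i2 * B i2 j.
Proof. by rewrite mxE sum_ord3. Qed.

Lemma det_mx22 (B : 'M[R]_2) : \det B = B 0 0 * B 1 1 - B 0 1 * B 1 0.
Proof.
rewrite (expand_det_row B 0) !big_ord_recl big_ord0 addr0 /cofactor !det_mx11.
rewrite !mxE /= expr0 expr1.
have -> : lift 0 0 = 1 :> 'I_2 by apply: val_inj.
have -> : lift 1 0 = 0 :> 'I_2 by apply: val_inj.
have -> : ord0 = 0 :> 'I_2 by apply: val_inj.
ring.
Qed.

Lemma det_mx33 (A : 'M[R]_3) : \det A =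
  A i0 i0 * (A i1 i1 * A i2 i2 - A i1 i2 * A i2 i1)
  - A i0 i1 * (A i1 i0 * A i2 i2 - A i1 i2 * A i2 i0)
  + A i0 i2 * (A i1 i0 * A i2 i1 - A i1 i1 * A i2 i0).
Proof.
rewrite (expand_det_row A i0) sum_ord3 /cofactor !det_mx22 !mxE /=.
have -> : lift i0 0 = i1 by apply: val_inj.
have -> : lift i0 1 = i2 by apply: val_inj.
have -> : lift i1 0 = i0 by apply: val_inj.
have -> : lift i1 1 = i2 by apply: val_inj.
have -> : lift i2 0 = i0 by apply: val_inj.
have -> : lift i2 1 = i1 by apply: val_inj.
by rewrite expr0 expr1 expr2; ring.
Qed.

Lemma mx3_eta (Q : 'M[R]_3) :
  Q = mx3 (Q i0 i0) (Q i0 i1) (Q i0 i2) (Q i1 i0) (Q i1 i1) (Q i1 i2)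
          (Q i2 i0) (Q i2 i1) (Q i2 i2).
Proof. by apply/matrixP => i j; rewrite mxE; move: i j; do 2 apply: ord3_ind. Qed.

End Coordinates.

Lemma sqr_le1 (R : realDomainType) (x : R) : x * x <= 1 -> -1 <= x <= 1.
Proof. by move=> x2_le1; apply/andP; split; nra. Qed.

Lemma sqr_add_eq0 (R : realDomainType) (x y : R) :
  x ^+ 2 + y ^+ 2 = 0 -> x = 0 /\ y = 0.
Proof. by move/eqP; rewrite paddr_eq0 ?sqr_ge0 // !sqrf_eq0 => /andP[/eqP -> /eqP ->]. Qed.

Definition rotation_entries (R : rcfType) (a b c d e f g h k : R) : Prop :=
  [/\ [/\ a*a + d*d + g*g = 1, b*b + e*e + h*h = 1 & c*c + f*f + k*k = 1],
      [/\ a*b + d*e + g*h = 0, a*c + d*f + g*k = 0 & b*c + e*f + h*k = 0],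
      [/\ a*a + b*b + c*c = 1, d*d + e*e + f*f = 1 & g*g + h*h + k*k = 1],
      [/\ a*d + b*e + c*f = 0, a*g + b*h + c*k = 0 & d*g + e*h + f*k = 0] &
      a*(e*k - f*h) - b*(d*k - f*g) + c*(d*h - e*g) = 1].

(* SO(3) membership in coordinates; the rows are orthonormal because a
   one-sided inverse of a square matrix is two-sided. *)
Lemma SO3_mx3 (R : rcfType) (a b c d e f g h k : R) :
  SO3 (mx3 a b c d e f g h k) <-> rotation_entries a b c d e f g h k.
Proof.
split=> [[MtM detM] | [[N1 N2 N3] [O1 O2 O3] _ _ detM]]; last first.
  split; last by rewrite det_mx33 !mxE.
  by apply/matrixP => i j; rewrite mulmx3E !mxE; move: i j; do 2 apply: ord3_ind => /=; lra.
move/matrixP: (mulmx1C MtM) => row; move/matrixP: MtM => col.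
rewrite det_mx33 !mxE /= in detM.
split=> //; split;
  [move: (col i0 i0) | move: (col i1 i1) | move: (col i2 i2) | move: (col i0 i1)
  | move: (col i0 i2) | move: (col i1 i2) | move: (row i0 i0) | move: (row i1 i1)
  | move: (row i2 i2) | move: (row i0 i1) | move: (row i0 i2) | move: (row i1 i2)];
  by rewrite mulmx3E !mxE.
Qed.

Lemma SO3_entries (R : rcfType) (Q : 'M[R]_3) : SO3 Q ->
  rotation_entries (Q i0 i0) (Q i0 i1) (Q i0 i2) (Q i1 i0) (Q i1 i1) (Q i1 i2)
                   (Q i2 i0) (Q i2 i1) (Q i2 i2).
Proof. by move=> SO3Q; apply/SO3_mx3; rewrite -mx3_eta. Qed.

Section RotationEntries.
Variables (R : rcfType) (a b c d e f g h k : R).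
Hypothesis rot : rotation_entries a b c d e f g h k.

(* The diagonal entries of a rotation equal their cofactors; each identity
   below expresses "cofactor - entry" through the defining relations. *)
Lemma rotation_cofactors : [/\ a = e*k - f*h, e = a*k - c*g & k = a*e - b*d].
Proof.
case: rot => [[N1 N2 N3] [O1 O2 O3] _ _ D].
set det := a*(e*k - f*h) - b*(d*k - f*g) + c*(d*h - e*g) in D.
have cof00 : (e*k - f*h) - a = (det - 1) * a - ((e*k - f*h) * (a*a + d*d + g*g - 1)
    - (d*k - f*g) * (a*b + d*e + g*h) + (d*h - e*g) * (a*c + d*f + g*k)).
  by rewrite /det; ring.
have cof11 : (a*k - c*g) - e = (det - 1) * e - (- (b*k - c*h) * (a*b + d*e + g*h)
    + (a*k - c*g) * (b*b + e*e + h*h - 1) - (a*h - b*g) * (b*c + e*f + h*k)).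
  by rewrite /det; ring.
have cof22 : (a*e - b*d) - k = (det - 1) * k - ((b*f - c*e) * (a*c + d*f + g*k)
    - (a*f - c*d) * (b*c + e*f + h*k) + (a*e - b*d) * (c*c + f*f + k*k - 1)).
  by rewrite /det; ring.
rewrite D N1 N2 N3 O1 O2 O3 in cof00 cof11 cof22.
by split; lra.
Qed.

(* (t, k) = (a + e, k) lies in the triangle |t| <= 1 + k <= 2.  The products
   of 1 + tr with 1 + 2 a - tr, 1 + 2 e - tr, 1 + 2 k - tr are squares (the
   quaternion identities), whence 1 + tr >= 0 and 1 + 2 k - tr >= 0. *)
Lemma rotation_trace_bounds : -1 <= k <= 1 /\ - (1 + k) <= a + e <= 1 + k.
Proof.
have [[N1 N2 N3] _ [R1 R2 R3] _ _] := rot.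
have [Ca Ce Ck] := rotation_cofactors.
have T1 : (1 + a + e + k) * (1 + a - e - k) = (h - f) ^+ 2.
  have -> : (1 + a + e + k) * (1 + a - e - k) = (h - f) ^+ 2 + 2 * (a - (e*k - f*h))
    + (a*a + b*b + c*c - 1) - (b*b + e*e + h*h - 1) - (c*c + f*f + k*k - 1) by ring.
  by rewrite -Ca R1 N2 N3; ring.
have T2 : (1 + a + e + k) * (1 + k - a - e) = (d - b) ^+ 2.
  have -> : (1 + a + e + k) * (1 + k - a - e) = (d - b) ^+ 2 + 2 * (k - (a*e - b*d))
    - (a*a + d*d + g*g - 1) - (b*b + e*e + h*h - 1) + (g*g + h*h + k*k - 1) by ring.
  by rewrite -Ck N1 N2 R3; ring.
have T3 : (1 + a + e + k) * (1 + e - a - k) = (c - g) ^+ 2.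
  have -> : (1 + a + e + k) * (1 + e - a - k) = (c - g) ^+ 2 + 2 * (e - (a*k - c*g))
    - (a*a + b*b + c*c - 1) + (b*b + e*e + h*h - 1) - (g*g + h*h + k*k - 1) by ring.
  by rewrite -Ce R1 N2 R3; ring.
have := sqr_ge0 (h - f); have := sqr_ge0 (d - b); have := sqr_ge0 (c - g).
rewrite -T1 -T2 -T3 => sq_cg sq_db sq_hf.
have sum_sq : 0 <= (1 + a + e + k) * (3 - a - e - k) by lra.
have trace_ge : 0 <= 1 + a + e + k.
  rewrite leNgt; apply/negP => trace_lt.
  have : 0 < - (1 + a + e + k) * (3 - a - e - k) by apply: mulr_gt0; lra.
  lra.
have k_bounds : -1 <= k <= 1.
  by apply: sqr_le1; have := sqr_ge0 c; have := sqr_ge0 f; rewrite !expr2; lra.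
have t_le : 0 <= 1 + k - a - e.
  have [trace0 | trace_neq0] := eqVneq (1 + a + e + k) 0.
    by move: k_bounds => /andP[]; lra.
  have trace_gt : 0 < 1 + a + e + k by rewrite lt_def trace_neq0.
  by rewrite -(pmulr_rge0 _ trace_gt).
by split=> //; apply/andP; split; lra.
Qed.

End RotationEntries.

Lemma rotation_fixing_axis (R : rcfType) (a b c d e f g h : R) :
  rotation_entries a b c d e f g h 1 ->
  [/\ c = 0, f = 0, g = 0 & h = 0] /\ [/\ e = a, b = - d & a ^+ 2 + d ^+ 2 = 1].
Proof.
move=> [[N1 N2 N3] _ [_ _ R3] _ D].
have [c0 f0] : c = 0 /\ f = 0 by apply: sqr_add_eq0; lra.
have [g0 h0] : g = 0 /\ h = 0 by apply: sqr_add_eq0; lra.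
rewrite c0 f0 g0 h0 in N1 N2 D.
have [ae0 bd0] : a - e = 0 /\ b + d = 0 by apply: sqr_add_eq0; lra.
by split; split; lra.
Qed.

Lemma W10_diag_entries (R : rcfType) (l1 l3 : R) (Q : 'M[R]_3) :
  W10 (diag3 l1 l1 l3) Q =
    (l1 * Q i0 i0 - 1) ^+ 2 + (l1 * Q i1 i1 - 1) ^+ 2 + (l3 * Q i2 i2 - 1) ^+ 2
    + ((l1 * Q i1 i0 + l1 * Q i0 i1) ^+ 2 + (l3 * Q i2 i0 + l1 * Q i0 i2) ^+ 2
       + (l3 * Q i2 i1 + l1 * Q i1 i2) ^+ 2) / 2.
Proof.
rewrite /W10 /sqnorm /symm /mxtrace /diag3 sum_ord3 !mulmx3E !mxE !sum_ord3 !mxE /=.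
by field.
Qed.

Definition reducedW (R : realFieldType) (l1 l3 t k : R) : R :=
  (l1 * t - 2 - (1 - k) * l3) ^+ 2 / 2 + (1 - k) * (l1 ^+ 2 - l3 ^+ 2) + (l3 - 1) ^+ 2.

(* The reduction: the difference is a combination of the row-norm and
   cofactor relations of a rotation. *)
Lemma rotation_W10 (R : rcfType) (l1 l3 a b c d e f g h k : R) :
  rotation_entries a b c d e f g h k ->
  (l1 * a - 1) ^+ 2 + (l1 * e - 1) ^+ 2 + (l3 * k - 1) ^+ 2
  + ((l1 * d + l1 * b) ^+ 2 + (l3 * g + l1 * c) ^+ 2 + (l3 * h + l1 * f) ^+ 2) / 2
  = reducedW l1 l3 (a + e) k.
Proof.
move=> rot; have [_ _ [R1 R2 R3] _ _] := rot; have [Ca Ce Ck] := rotation_cofactors rot.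
rewrite /reducedW; have -> :
  (l1 * a - 1) ^+ 2 + (l1 * e - 1) ^+ 2 + (l3 * k - 1) ^+ 2
  + ((l1 * d + l1 * b) ^+ 2 + (l3 * g + l1 * c) ^+ 2 + (l3 * h + l1 * f) ^+ 2) / 2
  = (l1 * (a + e) - 2 - (1 - k) * l3) ^+ 2 / 2 + (1 - k) * (l1 ^+ 2 - l3 ^+ 2) + (l3 - 1) ^+ 2
    + l1 ^+ 2 / 2 * (a*a + b*b + c*c - 1) + l1 ^+ 2 / 2 * (d*d + e*e + f*f - 1)
    + l3 ^+ 2 / 2 * (g*g + h*h + k*k - 1)
    + l1 ^+ 2 * (k - (a*e - b*d)) + l1 * l3 * ((e - (a*k - c*g)) + (a - (e*k - f*h))).
  by field.
by rewrite -Ca -Ce -Ck R1 R2 R3 !subrr; ring.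
Qed.

Lemma W10_SO3 (R : rcfType) (l1 l3 : R) (Q : 'M[R]_3) : SO3 Q ->
  W10 (diag3 l1 l1 l3) Q = reducedW l1 l3 (Q i0 i0 + Q i1 i1) (Q i2 i2).
Proof. by move=> /SO3_entries rot; rewrite W10_diag_entries rotation_W10. Qed.

(* On the triangle, reducedW is at most its value at (t, k) = (-2, 1), and only
   there: the gap is a sum of products of nonnegative quantities. *)
Lemma reducedW_max (R : realFieldType) (l1 l3 t k : R) :
  0 < l3 -> l3 < l1 -> -1 <= k <= 1 -> - (1 + k) <= t <= 1 + k ->
  reducedW l1 l3 t k <= 2 * (l1 + 1) ^+ 2 + (l3 - 1) ^+ 2 /\
  (2 * (l1 + 1) ^+ 2 + (l3 - 1) ^+ 2 <= reducedW l1 l3 t k -> k = 1 /\ t = -2).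
Proof.
move=> l3_gt0 l3_lt_l1 /andP[k_ge k_le] /andP[t_ge t_le].
have gap : 2 * (l1 + 1) ^+ 2 + (l3 - 1) ^+ 2 - reducedW l1 l3 t k =
  2 * (l1 * (1 + k + t)) + 2 * ((l1 - l3) * (1 - k))
  + 8 * (l1 ^+ 2 * ((1 + k - t) / 4 * ((1 + k + t) / 4)))
  + 2 * ((l1 - l3) ^+ 2 * ((1 + k - t) / 4 * ((1 - k) / 2)))
  + 2 * ((l1 + l3) ^+ 2 * ((1 + k + t) / 4 * ((1 - k) / 2))).
  by rewrite /reducedW; field.
have t1 : 0 <= l1 * (1 + k + t) by apply: mulr_ge0; lra.
have t2 : 0 <= (l1 - l3) * (1 - k) by apply: mulr_ge0; lra.
have t3 : 0 <= l1 ^+ 2 * ((1 + k - t) / 4 * ((1 + k + t) / 4)).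
  by apply: mulr_ge0; [exact: sqr_ge0 | apply: mulr_ge0; lra].
have t4 : 0 <= (l1 - l3) ^+ 2 * ((1 + k - t) / 4 * ((1 - k) / 2)).
  by apply: mulr_ge0; [exact: sqr_ge0 | apply: mulr_ge0; lra].
have t5 : 0 <= (l1 + l3) ^+ 2 * ((1 + k + t) / 4 * ((1 - k) / 2)).
  by apply: mulr_ge0; [exact: sqr_ge0 | apply: mulr_ge0; lra].
split=> [|W_ge]; first lra.
have l1_gt0 : 0 < l1 by lra.
have l13_gt0 : 0 < l1 - l3 by lra.
have : 1 + k + t <= 0 by rewrite -(pmulr_rle0 _ l1_gt0); lra.
have : 1 - k <= 0 by rewrite -(pmulr_rle0 _ l13_gt0); lra.
lra.
Qed.

(* For k <= 1, reducedW >= (l3 - 1)^2, with equality only for k = 1, l1 t = 2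
   (a point of the triangle exactly when l1 >= 1). *)
Lemma reducedW_min (R : realFieldType) (l1 l3 t k : R) :
  0 < l3 -> l3 < l1 -> k <= 1 ->
  (l3 - 1) ^+ 2 <= reducedW l1 l3 t k /\
  (reducedW l1 l3 t k <= (l3 - 1) ^+ 2 -> k = 1 /\ l1 * t = 2).
Proof.
move=> l3_gt0 l3_lt_l1 k_le.
have gap : 0 <= (1 - k) * (l1 ^+ 2 - l3 ^+ 2) by apply: mulr_ge0; nra.
have sq := sqr_ge0 (l1 * t - 2 - (1 - k) * l3).
rewrite /reducedW; split=> [|W_le]; first lra.
have k1 : k = 1.
  have : (1 - k) * (l1 ^+ 2 - l3 ^+ 2) <= 0 by lra.
  by rewrite pmulr_lle0; nra.
have sq0 : (l1 * t - 2 - (1 - k) * l3) ^+ 2 = 0 by lra.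
rewrite k1 subrr mul0r subr0 in sq0.
by split=> //; apply/eqP; rewrite -subr_eq0 -sqrf_eq0 sq0.
Qed.

(* When l1 <= 1 the constraint t <= 1 + k keeps l1 t - 2 away from 0, and the
   minimum moves to the corner (t, k) = (2, 1). *)
Lemma reducedW_min_small (R : realFieldType) (l1 l3 t k : R) :
  0 < l3 -> l3 < l1 -> l1 <= 1 -> k <= 1 -> t <= 1 + k ->
  2 * (l1 - 1) ^+ 2 + (l3 - 1) ^+ 2 <= reducedW l1 l3 t k /\
  (reducedW l1 l3 t k <= 2 * (l1 - 1) ^+ 2 + (l3 - 1) ^+ 2 -> k = 1 /\ t = 2).
Proof.
move=> l3_gt0 l3_lt_l1 l1_le1 k_le t_le.
have gap : 0 <= (1 - k) * (l1 ^+ 2 - l3 ^+ 2) by apply: mulr_ge0; nra.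
have X_le : l1 * t - 2 - (1 - k) * l3 <= 2 * (l1 - 1) - (l1 + l3) * (1 - k) by nra.
have Y_ge : 0 <= (l1 + l3) * (1 - k) by apply: mulr_ge0; lra.
have sq : (2 * (l1 - 1)) ^+ 2 <= (l1 * t - 2 - (1 - k) * l3) ^+ 2 by nra.
rewrite /reducedW; split=> [|W_le]; first lra.
have k1 : k = 1.
  have : (1 - k) * (l1 ^+ 2 - l3 ^+ 2) <= 0 by lra.
  by rewrite pmulr_lle0; nra.
rewrite k1 subrr mul0r subr0 in X_le sq W_le.
have /eqP : (l1 * t - 2) ^+ 2 = (2 * (l1 - 1)) ^+ 2 by lra.
rewrite eqf_sqr => /orP roots.
have E : l1 * t - 2 = 2 * (l1 - 1) by case: roots => /eqP; lra.
have l1_neq0 : l1 != 0 by rewrite gt_eqF //; lra.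
by split=> //; apply: (mulfI l1_neq0); lra.
Qed.

Definition rotz (R : rcfType) (c s : R) : 'M[R]_3 := mx3 c (- s) 0 s c 0 0 0 1.

Lemma SO3_rotz (R : rcfType) (c s : R) : c ^+ 2 + s ^+ 2 = 1 -> SO3 (rotz c s).
Proof. by rewrite !expr2 => cs1; apply/SO3_mx3; do !split; lra. Qed.

Lemma SO3_fixing_e3 (R : rcfType) (Q : 'M[R]_3) : SO3 Q -> Q i2 i2 = 1 ->
  exists c s, Q = rotz c s /\ c ^+ 2 + s ^+ 2 = 1.
Proof.
move=> /SO3_entries rot Q22; rewrite Q22 in rot.
have [[c0 f0 g0 h0] [e_a b_d cs1]] := rotation_fixing_axis rot.
by exists (Q i0 i0), (Q i1 i0); rewrite {1}[Q]mx3_eta Q22 c0 f0 g0 h0 e_a b_d.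
Qed.

Lemma W10_rotz (R : rcfType) (l1 l3 c s : R) : c ^+ 2 + s ^+ 2 = 1 ->
  W10 (diag3 l1 l1 l3) (rotz c s) = 2 * (l1 * c - 1) ^+ 2 + (l3 - 1) ^+ 2.
Proof.
move=> cs1; rewrite W10_SO3; last exact: SO3_rotz.
by rewrite /reducedW /rotz !mxE /=; field.
Qed.

Lemma global_max_SO3E (R : rcfType) (f : 'M[R]_3 -> R) (Q : 'M[R]_3) :
  is_global_max_SO3 f Q <-> is_global_min_SO3 (fun P => - f P) Q.
Proof.
by split=> [[SO3Q maxQ] | [SO3Q minQ]]; split=> // P SO3P;
  [rewrite lerN2; exact: maxQ | rewrite -lerN2; exact: minQ].
Qed.

Lemma global_min_SO3P (R : rcfType) (f : 'M[R]_3 -> R) (m : R) (Z : 'M[R]_3 -> Prop) :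
  (exists Q, Z Q) -> (forall Q, Z Q -> SO3 Q /\ f Q = m) ->
  (forall P, SO3 P -> m <= f P /\ (f P <= m -> Z P)) ->
  forall Q, is_global_min_SO3 f Q <-> Z Q.
Proof.
move=> [Q0 ZQ0] onZ lower Q; split=> [[SO3Q minQ] | ZQ].
  have [SO3Q0 fQ0] := onZ _ ZQ0.
  by apply: (lower _ SO3Q).2; rewrite -fQ0; exact: minQ.
have [SO3Q fQ] := onZ _ ZQ; split=> // P SO3P; rewrite fQ; exact: (lower _ SO3P).1.
Qed.

Lemma W10_global_max (R : rcfType) (l1 l3 : R) : 0 < l3 -> l3 < l1 ->
  forall Q, is_global_max_SO3 (W10 (diag3 l1 l1 l3)) Q <-> Q = diag3 (-1) (-1) 1.
Proof.
move=> l3_gt0 l3_lt_l1 Q; rewrite global_max_SO3E.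
have half_turn : diag3 (-1 : R) (-1) 1 = rotz (-1) 0 by rewrite /rotz oppr0.
have unit : (-1 : R) ^+ 2 + 0 ^+ 2 = 1 by rewrite sqrrN expr1n expr0n addr0.
apply: (global_min_SO3P (m := - (2 * (l1 + 1) ^+ 2 + (l3 - 1) ^+ 2))
         (Z := fun P => P = diag3 (-1) (-1) 1)) => [|_ ->|P SO3P].
- by exists (diag3 (-1) (-1) 1).
- rewrite half_turn W10_rotz //; split; [exact: SO3_rotz | congr (- _); ring].
- have [k_bd t_bd] := rotation_trace_bounds (SO3_entries SO3P).
  have [W_le W_eq] := reducedW_max l3_gt0 l3_lt_l1 k_bd t_bd.
  rewrite W10_SO3 // !lerN2; split=> [// | /W_eq [k1 t2]].
  have [c [s [PE cs1]]] := SO3_fixing_e3 SO3P k1; subst P.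
  rewrite /rotz !mxE /= in t2; have c_m1 : c = -1 by lra.
  have : s ^+ 2 = 0 by rewrite c_m1 in cs1; lra.
  by move/eqP; rewrite sqrf_eq0 half_turn c_m1 => /eqP ->.
Qed.

Lemma W10_global_min_large (R : rcfType) (l1 l3 : R) : 0 < l3 -> l3 < l1 -> 1 < l1 ->
  let s := Num.sqrt (1 - 1 / l1 ^+ 2) in
  forall Q, is_global_min_SO3 (W10 (diag3 l1 l1 l3)) Q <->
    (Q = mx3 (1 / l1) (- s) 0  s (1 / l1) 0  0 0 1 \/
     Q = mx3 (1 / l1) s 0  (- s) (1 / l1) 0  0 0 1).
Proof.
move=> l3_gt0 l3_lt_l1 l1_gt1 s Q.
have l1_neq0 : l1 != 0 by rewrite gt_eqF //; lra.
have root_ge0 : 0 <= 1 - 1 / l1 ^+ 2 by rewrite subr_ge0 mul1r invf_le1; nra.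
have s2 : s ^+ 2 = 1 - (1 / l1) ^+ 2 by rewrite sqr_sqrtr // expr_div_n expr1n.
have unit : (1 / l1) ^+ 2 + s ^+ 2 = 1 by rewrite s2; ring.
have other : mx3 (1 / l1) s 0 (- s) (1 / l1) 0 0 0 1 = rotz (1 / l1) (- s).
  by rewrite /rotz opprK.
apply: (global_min_SO3P (m := (l3 - 1) ^+ 2) (Z := fun P =>
  P = mx3 (1 / l1) (- s) 0  s (1 / l1) 0  0 0 1 \/
  P = mx3 (1 / l1) s 0  (- s) (1 / l1) 0  0 0 1)) => [|P|P SO3P].
- by exists (rotz (1 / l1) s); left.
- rewrite other; case=> ->; rewrite W10_rotz ?sqrrN //;
    (split; [by apply: SO3_rotz; rewrite ?sqrrN | by field]).
- have [/andP[_ k_le] _] := rotation_trace_bounds (SO3_entries SO3P).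
  have [W_ge W_eq] := reducedW_min (P i0 i0 + P i1 i1) l3_gt0 l3_lt_l1 k_le.
  rewrite W10_SO3 //; split=> [// | /W_eq [k1 t2]].
  have [c [s' [PE cs1]]] := SO3_fixing_e3 SO3P k1; subst P.
  rewrite /rotz !mxE /= in t2.
  have c_inv : c = 1 / l1 by apply: (mulfI l1_neq0); rewrite mul1r divff //; lra.
  have /eqP : s' ^+ 2 = s ^+ 2 by rewrite s2 -c_inv; lra.
  rewrite other c_inv eqf_sqr => /orP[] /eqP ->; [left | right] => //.
Qed.

Lemma W10_global_min_small (R : rcfType) (l1 l3 : R) : 0 < l3 -> l3 < l1 -> l1 <= 1 ->
  forall Q, is_global_min_SO3 (W10 (diag3 l1 l1 l3)) Q <-> Q = 1%:M.
Proof.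
move=> l3_gt0 l3_lt_l1 l1_le1 Q.
have no_turn : 1%:M = rotz (1 : R) 0.
  by apply/matrixP => i j; rewrite !mxE oppr0; move: i j; do 2 apply: ord3_ind.
have unit : (1 : R) ^+ 2 + 0 ^+ 2 = 1 by rewrite expr1n expr0n addr0.
apply: (global_min_SO3P (m := 2 * (l1 - 1) ^+ 2 + (l3 - 1) ^+ 2)
         (Z := fun P => P = 1%:M)) => [|_ ->|P SO3P].
- by exists 1%:M.
- by rewrite no_turn W10_rotz // mulr1; split; first exact: SO3_rotz.
- have [/andP[_ k_le] /andP[_ t_le]] := rotation_trace_bounds (SO3_entries SO3P).
  have [W_ge W_eq] := reducedW_min_small l3_gt0 l3_lt_l1 l1_le1 k_le t_le.
  rewrite W10_SO3 //; split=> [// | /W_eq [k1 t2]].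
  have [c [s [PE cs1]]] := SO3_fixing_e3 SO3P k1; subst P.
  rewrite /rotz !mxE /= in t2; have c1 : c = 1 by lra.
  have : s ^+ 2 = 0 by rewrite c1 in cs1; lra.
  by move/eqP; rewrite sqrf_eq0 no_turn c1 => /eqP ->.
Qed.

Unset Implicit Arguments.
Theorem mainTheorem10 (R : rcfType) (l1 l3 : R) (h3 : 0 < l3) (h13 : l3 < l1) :
  let D := diag3 l1 l1 l3 in
  let s := Num.sqrt (1 - 1 / l1 ^+ 2) in
  (forall Q, is_global_max_SO3 (W10 D) Q <-> Q = diag3 (-1) (-1) 1) /\
  (1 < l1 ->
     forall Q, is_global_min_SO3 (W10 D) Q <->
       (Q = mx3 (1 / l1) (- s) 0  s (1 / l1) 0  0 0 1 \/
        Q = mx3 (1 / l1) s 0  (- s) (1 / l1) 0  0 0 1)) /\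
  (l1 <= 1 -> forall Q, is_global_min_SO3 (W10 D) Q <-> Q = 1%:M).
Proof.
move=> D s; split; first exact: W10_global_max.
split=> [l1_gt1 | l1_le1]; first exact: W10_global_min_large.
exact: W10_global_min_small.
Qed.
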